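(* Let $G$ be a finite abelian group, let $B\subseteq G$ be a regular Bohr set of rank $d$, and let $A\subseteq B$ have relative density $\mu_B(A)=\alpha$. Let $C>0$ be a constant such that $|B|\ge(1-\frac1{20})|B_{1+\delta}|$, where $\delta=1/(Cd)$, and let $B',B''\subseteq B_\delta$ be nonempty. Then either (1) there is an $x\in G$ such that $1_A*\mu_{B'}(x)\ge\frac{8}{10}\alpha$ and $1_A*\mu_{B''}(x)\ge\frac{8}{10}\alpha$; or (2) $\|1_A*\mu_{B'}\|_\infty\ge1.1\alpha$ or $\|1_A*\mu_{B''}\|_\infty\ge1.1\alpha$.
   Context: For a finite abelian group $G$ with dual group $\widehat G$, a Bohr set with generating set $\Gamma\subseteq\widehat G$ and radius $\rho\ge0$ is $B(\Gamma,\rho)=\{x\in G:|1-\gamma(x)|\le\rho\text{ for all }\gamma\in\Gamma\}$; its rank is $|\Gamma|$. For $B=B(\Gamma,\rho)$ and $\delta>0$, $B_\delta:=B(\Gamma,\delta\rho)$. A Bohr set $B$ of rank $d$ is regular if for all $|\delta|\le1/(100d)$, $(1-100d|\delta|)|B|\le|B_{1+\delta}|\le(1+100d|\delta|)|B|$. $\mu_B(A)=|A\cap B|/|B|$, $\mu_T=1_T/|T|$, $f*g(x)=\sum_yf(y)g(x-y)$, $\|f\|_\infty=\sup_x|f(x)|$. *)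

From HB Require Import structures.
From mathcomp Require Import all_boot all_order all_algebra.
From mathcomp Require Import complex.
From mathcomp Require Import reals.
Set Implicit Arguments. Unset Strict Implicit. Unset Printing Implicit Defensive.
Import Order.TTheory GRing.Theory Num.Theory.
Local Open Scope ring_scope.
Local Open Scope complex_scope.

Definition is_character (R : realType) (G : finZmodType) (g : {ffun G -> R[i]}) : Prop :=
  g 0 = 1 /\ forall x y : G, g (x + y) = g x * g y.

Definition char_set (R : realType) (G : finZmodType) (Gam : seq {ffun G -> R[i]}) : Prop :=
  uniq Gam /\ forall g, g \in Gam -> is_character g.

Definition bohr (R : realType) (G : finZmodType) (Gam : seq {ffun G -> R[i]}) (rho : R)
  : {set G} :=
  [set x | all (fun g : {ffun G -> R[i]} => `|1 - g x| <= rho%:C) Gam].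

Definition regular_bohr (R : realType) (G : finZmodType) (Gam : seq {ffun G -> R[i]}) (rho : R)
  : Prop :=
  let d := (size Gam)%:R : R in
  forall delta : R, `|delta| <= 1 / (100 * d) ->
    (1 - 100 * d * `|delta|) * (#|bohr Gam rho|)%:R <= (#|bohr Gam ((1 + delta) * rho)|)%:R
    /\ (#|bohr Gam ((1 + delta) * rho)|)%:R <= (1 + 100 * d * `|delta|) * (#|bohr Gam rho|)%:R.

Definition rel_density {R : realType} (G : finType) (B A : {set G}) : R :=
  (#|A :&: B|)%:R / (#|B|)%:R.

Definition indic {R : realType} (G : finType) (A : {set G}) : G -> R :=
  fun x => (x \in A)%:R.
Definition mu {R : realType} (G : finType) (T : {set G}) : G -> R :=
  fun x => (x \in T)%:R / (#|T|)%:R.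

Definition conv (R : realType) (G : finZmodType) (f g : G -> R) : G -> R :=
  fun x => \sum_(y : G) f y * g (x - y).

Definition supnorm {R : realType} (G : finType) (f : G -> R) : R :=
  \big[Num.max/0]_(x : G) `|f x|.

(* Both convolutions 1_A * mu_B' and 1_A * mu_B'' have total mass |A| = alpha |B| and
   are supported on B + B_delta, which lies in B_{1+delta}.  As |B| >= (19/20)|B_{1+delta}|,
   the sum f1 + f2 averages at least (19/10) alpha over B_{1+delta}, so some x has
   f1 x + f2 x >= (8/10 + 11/10) alpha: either both values are at least (8/10) alpha,
   or one of them exceeds (11/10) alpha. *)
From HB Require Import structures.
From mathcomp Require Import all_boot all_order all_algebra.
From mathcomp Require Import complex.
From mathcomp Require Import reals.
From mathcomp Require fingroup cyclic.
From mathcomp Require Import lra.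
Set Implicit Arguments. Unset Strict Implicit. Unset Printing Implicit Defensive.
Import Order.TTheory GRing.Theory Num.Theory.
Local Open Scope ring_scope.

Section Characters.

Variables (R : realType) (G : finZmodType).

Lemma character_norm1 (g : {ffun G -> R[i]}) x : is_character g -> `|g x| = 1.
Proof.
case=> g0 gD.
have gMn n : g (x *+ n) = g x ^+ n.
  by elim: n => [|n IHn]; rewrite ?mulr0n ?expr0 // mulrS gD IHn exprS.
have xcard : x *+ #|G| = 0.
  rewrite -FinRing.zmodXgE.
  by have := @cyclic.expg_cardG _ (fingroup.setT_group _) x (in_setT x); rewrite cardsT.
have card_gt0 : (0 < #|G|)%N by apply/card_gt0P; exists 0.
have /(congr1 Num.norm) := gMn #|G|; rewrite xcard g0 normr1 normrX => /esym/eqP.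
by rewrite pexpr_eq1 // => /eqP.
Qed.

Lemma bohr0 (Gam : seq {ffun G -> R[i]}) r :
  char_set Gam -> 0 <= r -> (0 : G) \in bohr Gam r.
Proof.
move=> [_ Gam_char] r_ge0; rewrite inE; apply/allP => g /Gam_char [g0 _].
by rewrite g0 subrr normr0 lecR.
Qed.

Lemma bohrD (Gam : seq {ffun G -> R[i]}) r1 r2 a b :
  char_set Gam -> a \in bohr Gam r1 -> b \in bohr Gam r2 ->
  a + b \in bohr Gam (r1 + r2).
Proof.
move=> [_ Gam_char]; rewrite !inE => /allP a_bohr /allP b_bohr.
apply/allP => g g_Gam; have [_ gD] := Gam_char g g_Gam.
have -> : 1 - g (a + b) = (1 - g a) + g a * (1 - g b).
  by rewrite gD mulrBr mulr1 addrA subrK.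
apply: le_trans (ler_normD _ _) _.
rewrite normrM (character_norm1 _ (Gam_char g g_Gam)) mul1r rmorphD.
by rewrite lerD ?a_bohr ?b_bohr.
Qed.

End Characters.

Section Convolution.

Variables (R : realType) (G : finZmodType).
Implicit Types (A B T S : {set G}) (f : G -> R).

Lemma sum_indicator A : \sum_x ((x \in A)%:R : R) = #|A|%:R.
Proof.
rewrite -sumr_const [RHS]big_mkcond /=.
by apply: eq_bigr => x _; case: (x \in A).
Qed.

Lemma sum_conv_indic_mu A T :
  T != set0 -> \sum_x conv (indic A) (mu T) x = #|A|%:R :> R.
Proof.
move=> T_neq0; rewrite /conv exchange_big /=.
have mass_mu y : \sum_x (mu T (x - y) : R) = 1.
  rewrite (reindex_inj (addIr y)) /=.
  under eq_bigr => x _ do rewrite addrK.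
  rewrite /mu -mulr_suml sum_indicator.
  by rewrite mulfV // pnatr_eq0 -lt0n card_gt0.
under eq_bigr => y _ do rewrite -mulr_sumr mass_mu mulr1.
exact: sum_indicator.
Qed.

Lemma conv_indic_mu_eq0 A T S x :
  {in A & T, forall a t, a + t \in S} -> x \notin S ->
  conv (indic A) (mu T) x = 0 :> R.
Proof.
move=> sumsetS x_notS; rewrite /conv big1 // => y _; rewrite /indic /mu.
have [yA|] := boolP (y \in A); last by rewrite mul0r.
have [xyT|] := boolP (x - y \in T); last by rewrite mul0r mulr0.
by move: x_notS; rewrite -(subrK y x) addrC sumsetS.
Qed.

Lemma sum_conv_indic_mu_in A T S :
  T != set0 -> {in A & T, forall a t, a + t \in S} ->
  \sum_(x in S) conv (indic A) (mu T) x = #|A|%:R :> R.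
Proof.
move=> T_neq0 sumsetS; rewrite -(sum_conv_indic_mu A T_neq0) [RHS](bigID (mem S)) /=.
by rewrite [X in _ = _ + X]big1 ?addr0 // => x; apply: conv_indic_mu_eq0.
Qed.

Lemma ler_supnorm f x : f x <= supnorm f.
Proof.
apply: le_trans (real_ler_norm (num_real _)) _.
exact: (le_bigmax 0 (fun x => `|f x|) x).
Qed.

Lemma rel_densityK A B : A \subset B -> rel_density B A * #|B|%:R = #|A|%:R :> R.
Proof.
move=> AB; rewrite /rel_density (setIidPl AB).
have [B0|B_gt0] := posnP #|B|; last by rewrite divfK // pnatr_eq0 -lt0n.
suff -> : #|A| = 0%N by rewrite B0 !mul0r.
by apply/eqP; rewrite -leqn0 -B0 subset_leq_card.
Qed.

End Convolution.

Lemma exists_ge_average (R : realFieldType) (T : finType) (S : {set T}) (F : T -> R) c :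
  S != set0 -> c * #|S|%:R <= \sum_(x in S) F x -> exists2 x, x \in S & c <= F x.
Proof.
move=> /set0Pn [x0 x0S] avg; apply/exists_inP; move: avg.
apply: contraLR => /exists_inPn F_lt_c.
rewrite -ltNge mulr_natr -sumr_const.
by apply: ltr_sum => [|x /F_lt_c]; [apply/hasP; exists x0 | rewrite ltNge].
Qed.

Theorem lemma5p3 (R : realType) (G : finZmodType)
    (Gam : seq {ffun G -> R[i]}) (rho : R) (A B' B'' : {set G}) (C : R) :
  char_set Gam -> 0 <= rho -> (0 < size Gam)%N ->
  regular_bohr Gam rho ->
  A \subset bohr Gam rho ->
  0 < C ->
  let d : R := (size Gam)%:R in
  let delta : R := 1 / (C * d) in
  let B := bohr Gam rho in
  let alpha : R := rel_density B A in
  (1 - 1/20 : R) * (#|bohr Gam ((1 + delta) * rho)|)%:R <= (#|B|)%:R ->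
  B' \subset bohr Gam (delta * rho) -> B' != set0 ->
  B'' \subset bohr Gam (delta * rho) -> B'' != set0 ->
  let f1 : G -> R := conv (indic A) (mu B') in
  let f2 : G -> R := conv (indic A) (mu B'') in
  (exists x : G, 8/10 * alpha <= f1 x /\ 8/10 * alpha <= f2 x)
  \/ (11/10 * alpha <= supnorm f1 \/ 11/10 * alpha <= supnorm f2).
Proof.
move=> Gam_char rho_ge0 _ _ AB C_gt0 d delta B alpha B_big B'_small B'_neq0
  B''_small B''_neq0 f1 f2.
set S := bohr Gam ((1 + delta) * rho).
have delta_ge0 : 0 <= delta by rewrite /delta divr_ge0 // mulr_ge0 // ltW.
have sumsetS (T : {set G}) :
    T \subset bohr Gam (delta * rho) -> {in A & T, forall a t, a + t \in S}.
  move=> TB a t aA tT; rewrite /S mulrDl mul1r.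
  exact: bohrD Gam_char (subsetP AB _ aA) (subsetP TB _ tT).
have S_neq0 : S != set0.
  by apply/set0Pn; exists 0; rewrite bohr0 // mulr_ge0 // addr_ge0.
have alpha_ge0 : 0 <= alpha by rewrite divr_ge0.
have mass_S : 19/10 * alpha * #|S|%:R <= \sum_(x in S) (f1 x + f2 x).
  rewrite big_split /= !(sum_conv_indic_mu_in _ _ (sumsetS _ _)) //.
  rewrite -(rel_densityK R AB) -/B -/alpha.
  have := ler_wpM2l alpha_ge0 B_big; rewrite -/S; lra.
have [x _ f12x] := exists_ge_average S_neq0 mass_S.
have [sup1 sup2] := (ler_supnorm f1 x, ler_supnorm f2 x).
have [f1x_big|f1x_small] := lerP (8/10 * alpha) (f1 x); last by right; right; lra.
have [f2x_big|f2x_small] := lerP (8/10 * alpha) (f2 x); last by right; left; lra.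
by left; exists x.
Qed.
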